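(* Let $\mathbb{K}$ be a field of characteristic zero, $a_1,\ldots,a_s\in\mathbb{Z}^d$, $A$ the $d\times s$ matrix with columns $a_i$, and $\varphi:(\mathbb{K}\setminus\{0\})^d\to\mathbb{K}^s$, $x\mapsto(x^{a_1},\ldots,x^{a_s})$. Let $n\ge1$, let $\alpha_1<\cdots<\alpha_D$ be the elements of $\Lambda_{d,n}$, and let $J=\{\beta_1,\ldots,\beta_D\}\subset\Lambda_{s,n}$ with $\beta_1<\cdots<\beta_D$. Let $L_J$ be the $D\times D$ submatrix of $D^n_x(\varphi)$ formed by the rows $\beta_1,\ldots,\beta_D$ and all columns. Then for $x\in(\mathbb{K}\setminus\{0\})^d$, $$\det(L_J)=\frac{x^{A\beta_1+\cdots+A\beta_D}}{x^{\alpha_1+\cdots+\alpha_D}}\det(L_J^c),$$ where $L_J^c=(c_{\beta_i,\alpha_j})_{i,j}$.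
   Context: $\Lambda_{t,n}=\{\gamma\in\mathbb{N}^t:1\le|\gamma|\le n\}$ with graded lexicographic order; $|\gamma|$ the sum of entries; $D=\binom{n+d}{d}-1$, $M=\binom{n+s}{s}-1$; $\alpha!=\prod_i\alpha(i)!$; $\binom\beta\gamma=\prod_i\binom{\beta(i)}{\gamma(i)}$; $x^m=\prod_ix_i^{m(i)}$. For a morphism $\varphi=(g_1,\ldots,g_s)$ regular at $x$, $D^n_x(\varphi)=\big(\frac1{\alpha!}\frac{\partial^\alpha(\varphi-\varphi(x))^\beta}{\partial X^\alpha}|_x\big)_{\beta\in\Lambda_{s,n},\alpha\in\Lambda_{d,n}}$ (an $M\times D$ matrix), where $(\varphi-\varphi(x))^\beta=\prod_j(g_j-g_j(x))^{\beta(j)}$. With $A_1,\ldots,A_d$ the rows of $A$: $b_{\gamma,\alpha}=\prod_{i=1}^d\prod_{j=0}^{\alpha(i)-1}(A_i\cdot\gamma-j)$ and $c_{\beta,\alpha}=\frac1{\alpha!}\sum_{\gamma\le\beta,\gamma\ne0}(-1)^{|\beta-\gamma|}\binom\beta\gamma b_{\gamma,\alpha}$ (constants depending only on $A$, $\beta$, $\alpha$). *)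

From mathcomp Require Import all_boot all_order all_algebra.
Set Implicit Arguments. Unset Strict Implicit. Unset Printing Implicit Defensive.
Import Order.TTheory GRing.Theory Num.Theory.
Local Open Scope ring_scope.

Fixpoint allvecs (t n : nat) : seq (seq nat) :=
  if t is t'.+1 then
    flatten [seq [seq k :: v | v <- allvecs t' n] | k <- iota 0 n.+1]
  else [:: [::]].

Fixpoint below (b : seq nat) : seq (seq nat) :=
  if b is k :: b' then
    flatten [seq [seq c :: g | g <- below b'] | c <- iota 0 k.+1]
  else [:: [::]].

Fixpoint lexle (u v : seq nat) : bool :=
  match u, v with
  | [::], _ => true
  | _ :: _, [::] => false
  | a :: u', b :: v' => (a < b)%N || ((a == b) && lexle u' v')
  end.

Definition grlex_le (u v : seq nat) : bool :=
  (sumn u < sumn v)%N || ((sumn u == sumn v) && lexle u v).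
Definition grlex_lt (u v : seq nat) : bool := grlex_le u v && (u != v).

Definition Lambda (t n : nat) : seq (seq nat) :=
  sort grlex_le [seq v <- allvecs t n | (1 <= sumn v <= n)%N].

Definition Dim (n d : nat) : nat := ('C(n + d, d) - 1)%N.

Definition vfact (a : seq nat) : nat := \prod_(k <- a) k`!.
Definition vbinom (b g : seq nat) : nat := \prod_(p <- zip b g) 'C(p.1, p.2).

Section Laurent.
Variable K : fieldType.
Variable d : nat.

Definition mono (x : 'I_d -> K) (m : 'rV[int]_d) : K :=
  \prod_(i < d) (x i) ^ (m 0 i).

(* A Laurent polynomial in X_1..X_d is represented as a formal sum
   (list) of terms c * X^m. *)
Definition lpoly := seq (K * 'rV[int]_d).

Definition lp_eval (p : lpoly) (x : 'I_d -> K) : K :=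
  \sum_(t <- p) t.1 * mono x t.2.

Definition lp_mul (p q : lpoly) : lpoly :=
  [seq (t.1 * u.1, t.2 + u.2) | t : K * 'rV[int]_d <- p, u : K * 'rV[int]_d <- q].

Definition lp_one : lpoly := [:: (1, 0)].

Definition lp_pow (p : lpoly) (k : nat) : lpoly := iter k (lp_mul p) lp_one.

Definition lp_deriv (i : 'I_d) (p : lpoly) : lpoly :=
  [seq (t.1 * (t.2 0 i)%:~R, t.2 - delta_mx 0 i) | t : K * 'rV[int]_d <- p].

Definition lp_derivn (alpha : seq nat) (p : lpoly) : lpoly :=
  foldr (fun (i : 'I_d) (q : lpoly) => iter (nth 0%N alpha i) (lp_deriv i) q) p (enum 'I_d).

End Laurent.

Section Matrix.
Variable K : fieldType.
Variables d s : nat.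
Variable A : 'M[int]_(d, s).

Definition acol (j : 'I_s) : 'rV[int]_d := (col j A)^T.

Definition gshift (x : 'I_d -> K) (j : 'I_s) : lpoly K d :=
  [:: (1, acol j); (- mono x (acol j), 0)].

(* (phi - phi(x))^beta = prod_j (g_j - g_j(x))^{beta(j)} *)
Definition phi_shift_pow (x : 'I_d -> K) (beta : seq nat) : lpoly K d :=
  foldr (fun (j : 'I_s) (q : lpoly K d) => lp_mul (lp_pow (gshift x j) (nth 0%N beta j)) q)
        (lp_one K d) (enum 'I_s).

(* entry (beta, alpha) of D^n_x(phi) *)
Definition Dentry (x : 'I_d -> K) (beta alpha : seq nat) : K :=
  ((vfact alpha)%:R)^-1 * lp_eval (lp_derivn alpha (phi_shift_pow x beta)) x.

Definition Adot (i : 'I_d) (g : seq nat) : int :=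
  \sum_(k < s) A i k * (nth 0%N g k)%:Z.

Definition bconst (g alpha : seq nat) : K :=
  \prod_(i < d) \prod_(j < nth 0%N alpha i) ((Adot i g)%:~R - j%:R).

Definition cconst (beta alpha : seq nat) : K :=
  ((vfact alpha)%:R)^-1 *
  \sum_(g <- below beta | sumn g != 0%N)
     (-1) ^+ (sumn beta - sumn g) * (vbinom beta g)%:R * bconst g alpha.

Definition Avec (beta : seq nat) : 'rV[int]_d := \row_i Adot i beta.

Definition ivec (alpha : seq nat) : 'rV[int]_d := \row_i (nth 0%N alpha i)%:Z.

Variable n : nat.

Definition alphaj (j : 'I_(Dim n d)) : seq nat := nth [::] (Lambda d n) j.

Definition LJ (b : 'I_(Dim n d) -> seq nat) (x : 'I_d -> K) : 'M[K]_(Dim n d) :=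
  \matrix_(i, j) Dentry x (b i) (alphaj j).

Definition LJc (b : 'I_(Dim n d) -> seq nat) : 'M[K]_(Dim n d) :=
  \matrix_(i, j) cconst (b i) (alphaj j).

End Matrix.

(* Pair a Laurent polynomial p = sum c_m X^m with a weight G on exponents as
   sum c_m G(m), so that evaluation at x is the pairing with G(m) = x^m. Under this
   pairing d^alpha/dX^alpha acts on weights of the form Q(m) x^(m - v) by multiplying
   by the falling factorials prod_i m_i (m_i - 1) ... (m_i - alpha_i + 1), and
   multiplication by X^a - x^a acts on weights Q(m) x^m as x^a times the forward
   difference Q(m + a) - Q(m). Hence the (beta, alpha) entry of D^n_x(phi) is
   x^(A beta - alpha) / alpha! times the iterated finite difference
   sum_gamma (-1)^|beta - gamma| binom(beta, gamma) b_(gamma, alpha), whose gamma = 0 term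
   vanishes as alpha <> 0: it equals x^(A beta - alpha) c_(beta, alpha). So
   L_J = diag(x^(A beta_i)) L_J^c diag(x^(-alpha_j)), and the claim follows by taking
   determinants. *)

From mathcomp Require Import all_boot all_order all_algebra.
From mathcomp Require Import zify ring.
From Stdlib Require Import FunctionalExtensionality.
Import Order.TTheory GRing.Theory Num.Theory.
Set Implicit Arguments. Unset Strict Implicit.

Lemma size_allvecs t n v : v \in allvecs t n -> size v = t.
Proof.
elim: t v => [|t IH] v; first by rewrite inE => /eqP ->.
by case/flatten_mapP=> k _ /mapP [w /IH + ->] /= => ->.
Qed.

Lemma size_below B g : g \in below B -> size g = size B.
Proof.
elim: B g => [|k B IH] g; first by rewrite inE => /eqP ->.
by case/flatten_mapP=> c _ /mapP [w /IH + ->] /= => ->.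
Qed.

Lemma sumn_below B g : g \in below B -> sumn g <= sumn B.
Proof.
elim: B g => [|k B IH] g; first by rewrite inE => /eqP ->.
case/flatten_mapP=> c; rewrite mem_iota ltnS => /andP [_ le_ck] /mapP [w /IH le_wB ->] /=.
exact: leq_add.
Qed.

Lemma count_allvecs_sumn_le n t m : m <= n ->
  count (fun v => sumn v <= m) (allvecs t n) = 'C(m + t, t).
Proof.
elim: t m => [|t IH] m le_mn; first by rewrite /= addn0 bin0.
pose h k m := count (fun v => k + sumn v <= m) (allvecs t n).
have -> : count (fun v => sumn v <= m) (allvecs t.+1 n) = \sum_(k < n.+1) h k m.
  rewrite count_flatten -map_comp sumnE big_map -(subn0 n.+1) -/(index_iota 0 n.+1).
  by rewrite big_mkord; apply: eq_bigr => k _ /=; rewrite count_map.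
have h0 m' : m' <= n -> h 0 m' = 'C(m' + t, t) by move/IH.
have hS k m' : h k.+1 m'.+1 = h k m' by apply: eq_count => v; rewrite addSn ltnS.
have h_gt k m' : m' < k -> h k m' = 0.
  move=> lt_mk; apply/eqP; rewrite -leqn0 leqNgt -has_count; apply/hasP => -[v _].
  by apply/negP; rewrite -ltnNge (leq_trans lt_mk) ?leq_addr.
elim: m le_mn => [|m IHm] le_mn.
  by rewrite big_ord_recl h0 // big1 ?addn0 ?binn // => k _; rewrite h_gt.
rewrite big_ord_recl h0 //.
under eq_bigr do rewrite /bump /= hS.
move: (IHm (ltnW le_mn)); rewrite big_ord_recr /= h_gt // addn0 => ->.
by rewrite !addnS addSn binS addnC.
Qed.

Lemma size_Lambda t n : size (Lambda t n) = Dim n t.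
Proof.
rewrite /Lambda size_sort size_filter /Dim.
have := count_predUI (fun v => sumn v <= 0) (fun v => 1 <= sumn v <= n) (allvecs t n).
rewrite (@eq_count _ _ (fun v => sumn v <= n)); last by move=> v /=; case: (sumn v).
rewrite (@eq_count _ (predI _ _) pred0); last by move=> v /=; case: (sumn v).
by rewrite count_pred0 addn0 !count_allvecs_sumn_le // add0n binn => ->; lia.
Qed.

Lemma mem_Lambda t n v : v \in Lambda t n -> size v = t /\ 0 < sumn v.
Proof.
by rewrite /Lambda mem_sort mem_filter => /andP [/andP [-> _] /size_allvecs].
Qed.

Local Open Scope ring_scope.

Section FiniteDifferences.
Variables (V : zmodType) (R : comNzRingType).

Definition fdiff (v : V) (Q : V -> R) : V -> R := fun m => Q (m + v) - Q m.

Lemma iter_fdiff v Q b w :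
  iter b (fdiff v) Q w =
  \sum_(c < b.+1) (-1) ^+ (b - c) * 'C(b, c)%:R * Q (w + v *+ c).
Proof.
elim: b w => [|b IH] w; first by rewrite big_ord1 subn0 expr0 bin0 !mul1r addr0.
pose f c := Q (w + v *+ c).
rewrite iterS {1}/fdiff !IH.
under eq_bigr do rewrite -addrA -mulrS -/(f _).
under [X in _ - X]eq_bigr do rewrite -/(f _).
under [RHS]eq_bigr do rewrite -/(f _).
rewrite [RHS]big_ord_recl /= subn0 bin0.
under [X in _ = _ + X]eq_bigr do rewrite /bump add1n subSS binS natrD mulrDr mulrDl.
rewrite big_split /= addrA [RHS]addrC; congr (_ + _).
rewrite big_ord_recl big_ord_recr /= subn0 bin0 bin_small // mulr0n mulr0 mul0r addr0.
rewrite opprD -sumrN exprS !mulN1r !mulNr; congr (_ + _).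
apply: eq_bigr => c _.
by rewrite /bump add1n -(subnSK (ltn_ord c)) exprS mulN1r !mulNr.
Qed.

Lemma foldl_iter_fdiff (I : Type) (v : I -> V) (k : I -> nat) (l : seq I) Q m :
  foldl (fun Q j => iter (k j) (fdiff (v j)) Q) Q l m =
  \sum_(g <- below (map k l))
     (-1) ^+ (sumn (map k l) - sumn g) * (vbinom (map k l) g)%:R *
     Q (m + \sum_(p <- zip l g) v p.1 *+ p.2).
Proof.
elim: l Q m => [|j l IH] Q m.
  by rewrite big_seq1 /= subnn /vbinom !big_nil expr0 !mul1r addr0.
rewrite [LHS]/= IH.
change (below (map k (j :: l))) with
  (flatten [seq [seq c :: g | g <- below (map k l)] | c <- iota 0 (k j).+1]).
rewrite big_flatten big_map.
under eq_bigr do rewrite big_map.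
rewrite exchange_big big_seq [RHS]big_seq.
apply: eq_bigr => g /sumn_below le_g; rewrite iter_fdiff mulr_sumr.
have -> : iota 0 (k j).+1 = index_iota 0 (k j).+1 by rewrite /index_iota subn0.
rewrite big_mkord; apply: eq_bigr => c _.
have le_cj : (c <= k j)%N by rewrite -ltnS.
have -> : (k j + sumn (map k l) - (c + sumn g) = (k j - c) + (sumn (map k l) - sumn g))%N.
  by lia.
rewrite (_ : zip (j :: l) ((c : nat) :: g) = (j, c : nat) :: zip l g) // big_cons /=.
rewrite /vbinom big_cons /= -/(vbinom _ _) exprD natrM (addrC (v j *+ c)) addrA.
ring.
Qed.

End FiniteDifferences.

Section LaurentPairing.
Variables (K : fieldType) (d : nat).
Local Notation exps := 'rV[int]_d.
Local Notation lpoly := (lpoly K d).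

Definition lp_pair (G : exps -> K) (p : lpoly) : K := \sum_(t <- p) t.1 * G t.2.

(* The transposes, for [lp_pair], of multiplication by [p] and of [d/dX_i]. *)
Definition lp_mul_adj (p : lpoly) (G : exps -> K) : exps -> K :=
  fun m => lp_pair (fun m' => G (m' + m)) p.

Definition lp_deriv_adj (i : 'I_d) (G : exps -> K) : exps -> K :=
  fun m => (m 0 i)%:~R * G (m - delta_mx 0 i).

Lemma lp_eval_pair (p : lpoly) x : lp_eval p x = lp_pair (mono x) p.
Proof. by []. Qed.

Lemma lp_pair_one G : lp_pair G (lp_one K d) = G 0.
Proof. by rewrite /lp_pair big_seq1 mul1r. Qed.

Lemma lp_pair_mul G p q : lp_pair G (lp_mul p q) = lp_pair (lp_mul_adj p G) q.
Proof.
rewrite /lp_pair /lp_mul big_allpairs_dep exchange_big /=.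
apply: eq_bigr => u _; rewrite mulr_sumr; apply: eq_bigr => t _ /=; ring.
Qed.

Lemma lp_mul_adj_translate p G m :
  lp_mul_adj p (fun m' => G (m' + m)) = fun m' => lp_mul_adj p G (m' + m).
Proof.
apply: functional_extensionality => m'; rewrite /lp_mul_adj.
by congr lp_pair; apply: functional_extensionality => m0; rewrite addrA.
Qed.

Lemma lp_mul_adj1 : lp_mul_adj (lp_one K d) = id.
Proof.
apply: functional_extensionality => G; apply: functional_extensionality => m.
by rewrite /lp_mul_adj lp_pair_one add0r.
Qed.

Lemma lp_mul_adjM p q : lp_mul_adj (lp_mul p q) = lp_mul_adj q \o lp_mul_adj p.
Proof.
apply: functional_extensionality => G; apply: functional_extensionality => m.
by rewrite /= {1}/lp_mul_adj lp_pair_mul lp_mul_adj_translate.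
Qed.

Lemma lp_mul_adjX p k : lp_mul_adj (lp_pow p k) = iter k (lp_mul_adj p).
Proof.
elim: k => [|k IH]; first exact: lp_mul_adj1.
rewrite /lp_pow iterS -/(lp_pow p k) lp_mul_adjM IH.
by apply: functional_extensionality => G; rewrite iterSr.
Qed.

Lemma lp_pair_prod_pow (I : Type) (f : I -> lpoly) (k : I -> nat) G (l : seq I) :
  lp_pair G (foldr (fun j q => lp_mul (lp_pow (f j) (k j)) q) (lp_one K d) l) =
  foldl (fun H j => iter (k j) (lp_mul_adj (f j)) H) G l 0.
Proof.
elim: l G => [|j l IH] G /=; first exact: lp_pair_one.
by rewrite lp_pair_mul IH lp_mul_adjX.
Qed.

Lemma lp_pair_deriv G i p : lp_pair G (lp_deriv i p) = lp_pair (lp_deriv_adj i G) p.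
Proof. by rewrite /lp_pair big_map; apply: eq_bigr => t _; rewrite mulrA. Qed.

Lemma lp_pair_iter_deriv G i k p :
  lp_pair G (iter k (lp_deriv i) p) = lp_pair (iter k (lp_deriv_adj i) G) p.
Proof.
elim: k G => [|k IH] G //.
by rewrite iterS lp_pair_deriv IH iterSr.
Qed.

Lemma lp_pair_derivn G alpha p :
  lp_pair G (lp_derivn alpha p) =
  lp_pair (foldl (fun H (i : 'I_d) => iter (nth 0%N alpha i) (lp_deriv_adj i) H) G (enum 'I_d)) p.
Proof.
rewrite /lp_derivn; elim: (enum 'I_d) G => [|i l IH] G //=.
by rewrite lp_pair_iter_deriv IH.
Qed.

End LaurentPairing.

Section Monomials.
Variables (K : fieldType) (d : nat) (x : 'I_d -> K).
Hypothesis x_neq0 : forall i, x i != 0.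
Local Notation exps := 'rV[int]_d.

Lemma mono0 : mono x 0 = 1.
Proof. by rewrite /mono big1 // => i _; rewrite mxE expr0z. Qed.

Lemma monoN u : mono x (- u) = (mono x u)^-1.
Proof. by rewrite /mono -prodfV; apply: eq_bigr => i _; rewrite mxE invr_expz. Qed.

Lemma monoD u w : mono x (u + w) = mono x u * mono x w.
Proof. by rewrite /mono -big_split; apply: eq_bigr => i _; rewrite mxE exprzDr ?unitfE. Qed.

Lemma monoB u w : mono x (u - w) = mono x u / mono x w.
Proof. by rewrite monoD monoN. Qed.

Lemma monoMn u k : mono x (u *+ k) = mono x u ^+ k.
Proof. by elim: k => [|k IH]; rewrite ?mulr0n ?mono0 // mulrS monoD IH exprS. Qed.

Lemma mono_sum (I : Type) (r : seq I) (P : pred I) (F : I -> exps) :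
  mono x (\sum_(i <- r | P i) F i) = \prod_(i <- r | P i) mono x (F i).
Proof. exact: (big_morph _ monoD mono0). Qed.

Definition ffactz (z : int) (k : nat) : K := \prod_(j < k) (z%:~R - j%:R).

Definition ffactv (m : exps) (alpha : seq nat) : K :=
  \prod_(i < d) ffactz (m 0 i) (nth 0%N alpha i).

Lemma iter_lp_deriv_adj_mono i k (P : exps -> K) v :
  iter k (lp_deriv_adj i) (fun m => P m * mono x (m - v)) =
  fun m => ffactz (m 0 i) k * P (m - 'e_i *+ k) * mono x (m - (v + 'e_i *+ k)).
Proof.
elim: k => [|k IH]; apply: functional_extensionality => m /=.
  by rewrite /ffactz big_ord0 mul1r !mulr0n subr0 addr0.
rewrite IH /lp_deriv_adj /ffactz big_ord_recl /= subr0 !mulrA.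
have -> : \prod_(j < k) (((m - 'e_i) 0 i)%:~R - j%:R) =
          \prod_(j < k) ((m 0 i)%:~R - (bump 0 j)%:R :> K).
  by apply: eq_bigr => j _; rewrite !mxE !eqxx /= intrB /bump add1n -natr1; ring.
by rewrite !mulrS [v + (_ + _)]addrCA !opprD !addrA.
Qed.

Lemma foldl_lp_deriv_adj_mono (a : 'I_d -> nat) (l : seq 'I_d) (P : exps -> K) v :
  uniq l -> (forall i m k, i \in l -> P (m - 'e_i *+ k) = P m) ->
  foldl (fun H i => iter (a i) (lp_deriv_adj i) H) (fun m => P m * mono x (m - v)) l =
  fun m => (\prod_(i <- l) ffactz (m 0 i) (a i)) * P m *
           mono x (m - (v + \sum_(i <- l) 'e_i *+ a i)).
Proof.
elim: l P v => [|i l IH] P v.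
  by move=> _ _; apply: functional_extensionality => m; rewrite !big_nil mul1r addr0.
case/andP=> i_notin_l uniq_l P_inv /=.
set w := v + 'e_i *+ a i; rewrite iter_lp_deriv_adj_mono -/w.
have -> : (fun m : exps => ffactz (m 0 i) (a i) * P (m - 'e_i *+ a i) * mono x (m - w)) =
          (fun m : exps => (ffactz (m 0 i) (a i) * P m) * mono x (m - w)).
  by apply: functional_extensionality => m; rewrite P_inv ?mem_head.
rewrite IH //.
  by apply: functional_extensionality => m; rewrite !big_cons addrA; congr (_ * _); ring.
move=> j m k j_in_l; rewrite P_inv ?inE ?j_in_l ?orbT //; congr (_ * _).
have i_neq_j : (i == j) = false by apply: contraNF i_notin_l => /eqP ->.
by rewrite !mxE mulmxnE !mxE /= i_neq_j mul0rn subr0.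
Qed.

Lemma sum_delta_ivec (alpha : seq nat) :
  \sum_(i <- enum 'I_d) 'e_i *+ nth 0%N alpha i = ivec d alpha.
Proof.
apply/rowP => i; rewrite !mxE summxE big_enum (bigD1 i) //= big1 ?addr0.
  by rewrite mulmxnE !mxE !eqxx -natz.
by move=> j j_neq_i; rewrite mulmxnE !mxE eq_sym (negbTE j_neq_i) mul0rn.
Qed.

Lemma lp_pair_derivn_mono alpha p :
  lp_pair (mono x) (lp_derivn alpha p) =
  lp_pair (fun m => ffactv m alpha * mono x (m - ivec d alpha)) p.
Proof.
have -> : mono x = fun m => 1 * mono x (m - 0).
  by apply: functional_extensionality => m; rewrite subr0 mul1r.
rewrite lp_pair_derivn foldl_lp_deriv_adj_mono ?enum_uniq // add0r sum_delta_ivec.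
by congr lp_pair; apply: functional_extensionality => m; rewrite mulr1 subr0 mul1r big_enum.
Qed.

Lemma lp_mul_adj_Xsub a C Q :
  lp_mul_adj [:: (1, a); (- mono x a, 0)] (fun m => C * Q m * mono x m) =
  fun m => C * mono x a * fdiff a Q m * mono x m.
Proof.
apply: functional_extensionality => m.
by rewrite /lp_mul_adj /lp_pair !big_cons big_nil /= add0r monoD /fdiff [a + m]addrC; ring.
Qed.

Lemma iter_lp_mul_adj_Xsub a k C Q :
  iter k (lp_mul_adj [:: (1, a); (- mono x a, 0)]) (fun m => C * Q m * mono x m) =
  fun m => C * mono x a ^+ k * iter k (fdiff a) Q m * mono x m.
Proof.
elim: k => [|k IH]; first by apply: functional_extensionality => m; rewrite mulr1.
rewrite iterS IH lp_mul_adj_Xsub.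
by apply: functional_extensionality => m; rewrite exprSr mulrA.
Qed.

Lemma foldl_lp_mul_adj_Xsub (I : Type) (a : I -> exps) (k : I -> nat) (l : seq I) C Q :
  foldl (fun H j => iter (k j) (lp_mul_adj [:: (1, a j); (- mono x (a j), 0)]) H)
        (fun m => C * Q m * mono x m) l =
  fun m => C * (\prod_(j <- l) mono x (a j) ^+ k j) *
           foldl (fun Q j => iter (k j) (fdiff (a j)) Q) Q l m * mono x m.
Proof.
elim: l C Q => [|j l IH] C Q /=.
  by apply: functional_extensionality => m; rewrite big_nil mulr1.
rewrite iter_lp_mul_adj_Xsub IH.
by apply: functional_extensionality => m; rewrite big_cons mulrA.
Qed.

End Monomials.

Lemma map_nth_enum_ord (T : Type) (x0 : T) (s : nat) (g : seq T) :
  size g = s -> [seq nth x0 g j | j : 'I_s <- enum 'I_s] = g.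
Proof.
by move=> <-; rewrite -[RHS](mkseq_nth x0) /mkseq -val_enum_ord -map_comp.
Qed.

Lemma zip_enum_ord (T : Type) (x0 : T) (s : nat) (g : seq T) :
  size g = s -> zip (enum 'I_s) g = [seq (j, nth x0 g j) | j : 'I_s <- enum 'I_s].
Proof.
by move=> size_g; rewrite -zip_map map_id map_nth_enum_ord.
Qed.

Section Entries.
Variables (K : fieldType) (d s : nat) (A : 'M[int]_(d, s)) (x : 'I_d -> K).
Hypothesis x_neq0 : forall i, x i != 0.

Lemma Avec_sum g : Avec A g = \sum_(j < s) acol A j *+ nth 0%N g j.
Proof.
apply/rowP => i; rewrite !mxE summxE; apply: eq_bigr => j _.
by rewrite mulmxnE !mxE -natz mulr_natr.
Qed.

Lemma Avec_eq0 g : sumn g = 0%N -> Avec A g = 0.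
Proof.
move/eqP/natnseq0P => ->; apply/rowP => i.
by rewrite !mxE /Adot big1 // => j _; rewrite nth_nseq if_same mulr0.
Qed.

Lemma bconstE g alpha : bconst K A g alpha = ffactv K (Avec A g) alpha.
Proof. by apply: eq_bigr => i _; rewrite mxE. Qed.

Lemma ffactv0 alpha :
  size alpha = d -> (0 < sumn alpha)%N -> ffactv K (0 : 'rV_d) alpha = 0.
Proof.
move=> size_alpha sum_alpha_gt0.
have [i alpha_i_gt0] : exists i : 'I_d, (0 < nth 0%N alpha i)%N.
  apply/existsP; apply: contraTT sum_alpha_gt0 => /existsPn alpha_eq0.
  rewrite -eqn0Ngt; apply/natnseq0P/(@eq_from_nth _ 0%N); rewrite ?size_nseq // => k lt_k.
  rewrite nth_nseq lt_k; rewrite size_alpha in lt_k; have := alpha_eq0 (Ordinal lt_k).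
  by rewrite lt0n negbK => /eqP.
rewrite /ffactv (bigD1 i) //= /ffactz; case: (nth 0%N alpha i) alpha_i_gt0 => // k _.
by rewrite big_ord_recl mxE subr0 mul0r mul0r.
Qed.

Lemma lp_pair_phi_shift_pow beta (Q : 'rV[int]_d -> K) : size beta = s ->
  lp_pair (fun m => Q m * mono x m) (phi_shift_pow A x beta) =
  mono x (Avec A beta) *
  \sum_(g <- below beta) (-1) ^+ (sumn beta - sumn g) * (vbinom beta g)%:R * Q (Avec A g).
Proof.
move=> size_beta.
have -> : (fun m => Q m * mono x m) = fun m => 1 * Q m * mono x m.
  by apply: functional_extensionality => m; rewrite mul1r.
rewrite /phi_shift_pow lp_pair_prod_pow foldl_lp_mul_adj_Xsub //.
rewrite foldl_iter_fdiff map_nth_enum_ord // mono0 mulr1 mul1r.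
rewrite Avec_sum mono_sum // -big_enum; congr (_ * _).
  by apply: eq_bigr => j _; rewrite monoMn.
rewrite !big_seq; apply: eq_bigr => g /size_below; rewrite size_beta => size_g.
by rewrite add0r (zip_enum_ord 0%N size_g) big_map Avec_sum big_enum.
Qed.

Lemma DentryE beta alpha : size beta = s -> size alpha = d -> (0 < sumn alpha)%N ->
  Dentry A x beta alpha =
  mono x (Avec A beta) / mono x (ivec d alpha) * cconst K A beta alpha.
Proof.
move=> size_beta size_alpha sum_alpha_gt0.
rewrite /Dentry lp_eval_pair lp_pair_derivn_mono.
have -> : (fun m => ffactv K m alpha * mono x (m - ivec d alpha)) =
          fun m => (mono x (ivec d alpha))^-1 * ffactv K m alpha * mono x m.
  by apply: functional_extensionality => m; rewrite monoB //; ring.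
rewrite lp_pair_phi_shift_pow // /cconst.
pose c g := (-1) ^+ (sumn beta - sumn g) * (vbinom beta g)%:R : K.
have -> : \sum_(g <- below beta | sumn g != 0%N) c g * bconst K A g alpha =
          \sum_(g <- below beta) c g * ffactv K (Avec A g) alpha.
  rewrite big_mkcond; apply: eq_bigr => g _; rewrite bconstE.
  by case: eqP => // /Avec_eq0 ->; rewrite ffactv0 // mulr0.
have -> : \sum_(g <- below beta) c g * ((mono x (ivec d alpha))^-1 * ffactv K (Avec A g) alpha)
          = (mono x (ivec d alpha))^-1 * \sum_(g <- below beta) c g * ffactv K (Avec A g) alpha.
  by rewrite mulr_sumr; apply: eq_bigr => g _; ring.
ring.
Qed.

End Entries.

Theorem proposition2p3 (K : fieldType) (charK0 : [pchar K] =i pred0)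
  (d s : nat) (A : 'M[int]_(d, s)) (n : nat) (Hn : (1 <= n)%N)
  (b : 'I_(Dim n d) -> seq nat)
  (Hb : forall i, b i \in Lambda s n)
  (Hinc : forall i j : 'I_(Dim n d), (i < j)%N -> grlex_lt (b i) (b j))
  (x : 'I_d -> K) (Hx : forall i, x i != 0) :
  \det (@LJ K d s A n b x) =
    mono x (\sum_(i < Dim n d) @Avec d s A (b i)) /
    mono x (\sum_(j < Dim n d) ivec d (@alphaj d n j)) *
    \det (@LJc K d s A n b).
Proof.
have alphaj_Lambda (j : 'I_(Dim n d)) : alphaj j \in Lambda d n.
  by rewrite /alphaj mem_nth // size_Lambda.
have -> : LJ A b x = diag_mx (\row_i mono x (Avec A (b i))) *m LJc K A b *m
                     diag_mx (\row_j (mono x (ivec d (alphaj j)))^-1).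
  apply/matrixP => i j; rewrite mul_mx_diag mul_diag_mx !mxE.
  have [size_b _] := mem_Lambda (Hb i).
  have [size_a sum_a_gt0] := mem_Lambda (alphaj_Lambda j).
  by rewrite DentryE // mulrAC.
rewrite !det_mulmx !det_diag !mono_sum // -prodfV.
under eq_bigr do rewrite mxE.
under [X in _ * _ * X]eq_bigr do rewrite mxE.
ring.
Qed.
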